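(* Given a parity game with $d$ priorities, $n$ vertices and $m$ edges, and a set of tangles $T$, computing the top-down $\alpha$-maximal decomposition of the game (defined in the context) runs in time $O(dm+dn\lvert T\rvert)$.
   Context: Parity games: $\mathcal{G}=(V_0,V_1,E,\mathrm{pr})$, $V=V_0\cup V_1$ finite, partitioned into vertices of Even ($0$) and Odd ($1$); $E\subseteq V\times V$ with every vertex having a successor; $\mathrm{pr}:V\to\{0,\dots,d\}$. $E(u)=\{v:(u,v)\in E\}$, $\mathrm{pr}(U)=\max_{u\in U}\mathrm{pr}(u)$, $\mathrm{pr}^{-1}(p)$ the set of vertices of priority $p$, $\overline{\alpha}=1-\alpha$. A cycle is won by $\alpha$ if its highest priority has parity $\alpha$. A strategy of $\alpha$ is a partial function $\sigma$ on $V_\alpha$ with $\sigma(v)\in E(v)$. For $U\subseteq V$, $\mathcal{G}\setminus U$ is the subgame with vertices $V\setminus U$ and edges $E\cap((V\setminus U)\times(V\setminus U))$. A $p$-tangle is a nonempty $U\subseteq V$ with $p=\mathrm{pr}(U)$ such that for $\alpha\equiv p\pmod 2$ there is a strategy $\sigma:U\cap V_\alpha\to U$ (witness strategy $\sigma_T(U)$) with $(U,E\cap(\sigma\cup((U\cap V_{\overline{\alpha}})\times U)))$ strongly connected and all its cycles won by $\alpha$ (''won by $\alpha$''). For a tangle $t$ won by $\alpha$ in a game with edge set $E$, $E_T(t)=\{v\notin t:\exists u\in t\cap V_{\overline{\alpha}},(u,v)\in E\}$. $T_\alpha$ denotes the tangles of $T$ won by $\alpha$; for a subgame $\mathcal{G}'$,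 $T\cap\mathcal{G}'$ denotes the tangles of $T$ contained in its vertex set. Tangle attractor: for a game $\mathcal{G}$ with vertices $V$, tangles $T$, player $\alpha$ and $A\subseteq V$, $\mathit{TAttr}^{\mathcal{G},T}_\alpha(A)$ is the least $Z\supseteq A$ containing every $v\in V_\alpha$ with $E(v)\cap Z\neq\emptyset$, every $v\in V_{\overline{\alpha}}$ with $E(v)\subseteq Z$, and every vertex of every $t\in T_\alpha$ with $\emptyset\neq E_T(t)\subseteq Z$ ($E_T$ computed in $\mathcal{G}$), computed together with a strategy of $\alpha$ (each individually attracted $\alpha$-vertex is mapped to a successor in $Z$, each $\alpha$-vertex of $A$ to a successor in $Z$ once one exists, and the $\alpha$-vertices of an attracted tangle $t$ not yet having a strategy get $\sigma_T(t)$). Top-down $\alpha$-maximal decomposition of $\mathcal{G}$ w.r.t. $T$: starting with no regions, repeatedly let $\mathcal{G}'$ be $\mathcal{G}$ minus all vertices in already computed regions, $p=\mathrm{pr}(\mathcal{G}')$, $\alpha=p\bmod 2$, and compute the next region $\mathit{TAttr}^{\mathcal{G}',T\cap\mathcal{G}'}_\alpha(\mathrm{pr}^{-1}(p)\cap V(\mathcal{G}'))$, until every vertex lies in a region. *)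

From mathcomp Require Import all_boot.
Set Implicit Arguments. Unset Strict Implicit. Unset Printing Implicit Defensive.

(*   own v : bool    : owner of v; false = Even (player 0), true = Odd (1)    *)
(*   a player alpha is a bool; alpha = odd p is "p mod 2".                  *)
(*   Tangles are indexed by 'I_k: tv i lists the vertices of tangle i,       *)
(*   tsig i its witness strategy sigma_T, tesc i its escape set E_T (in G).  *)

Definition updf {I : eqType} {X : Type} (f : I -> X) (i : I) (x : X) : I -> X :=
  fun j => if j == i then x else f j.

Section Spec.
Variables (n : nat) (own : 'I_n -> bool) (pr : 'I_n -> nat)
          (succ : 'I_n -> seq 'I_n).
Local Notation V := 'I_n.

Definition prmax (S : {set V}) : nat := \max_(v in S) pr v.

Definition nedges : nat := \sum_(v : V) size (succ v).

Definition valid_game (d : nat) : Prop :=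
  (forall v, pr v <= d) /\ (forall v, succ v != [::]) /\ (forall v, uniq (succ v)).

(* edge relation of (S, E ∩ (sigma ∪ ((S ∩ V_abar) × S))) for a player a *)
Definition tangle_rel (S : {set V}) (a : bool) (sg : V -> V) : rel V :=
  fun u v => [&& u \in S, v \in S &
              if own u == a then v == sg u else v \in succ u].

(* p-tangle with witness strategy sg (only its values on S ∩ V_alpha matter) *)
Definition is_tangle (S : {set V}) (sg : V -> V) : Prop :=
  let a := odd (prmax S) in
  [/\ S != set0,
      (forall u, u \in S -> own u = a -> sg u \in S /\ sg u \in succ u),
      (forall u v, u \in S -> v \in S -> connect (tangle_rel S a sg) u v) &
      (forall c : seq V, c != [::] -> cycle (tangle_rel S a sg) c ->
         odd (\max_(v <- c) pr v) = a)].

Definition tangle_esc (U S : {set V}) (a : bool) : {set V} :=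
  [set v in U | (v \notin S) &&
     [exists u in S, (own u != a) && (v \in succ u)]].

Variables (k : nat) (tv : 'I_k -> seq V) (tsig : 'I_k -> V -> V).

Definition tset (i : 'I_k) : {set V} := [set x in tv i].

Definition astate := ({set V} * (V -> option V))%type.

(* one step of the tangle attractor TAttr^{G[U], T ∩ G[U]}_a (A), computed
   together with a (partial) strategy of a *)
Inductive attr_step (U A : {set V}) (a : bool) : astate -> astate -> Prop :=
| AttrAlpha (Z : {set V}) (s : V -> option V) v u :
    v \in U -> v \notin Z -> own v = a -> u \in Z -> u \in succ v ->
    attr_step U A a (Z, s) (v |: Z, updf s v (Some u))
| AttrOpp (Z : {set V}) (s : V -> option V) v :
    v \in U -> v \notin Z -> own v = ~~ a ->
    (forall u, u \in U -> u \in succ v -> u \in Z) ->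
    attr_step U A a (Z, s) (v |: Z, s)
| AttrA (Z : {set V}) (s : V -> option V) v u :
    v \in A -> own v = a -> s v = None -> u \in Z -> u \in succ v ->
    attr_step U A a (Z, s) (Z, updf s v (Some u))
| AttrTangle (Z : {set V}) (s : V -> option V) (i : 'I_k) :
    tset i \subset U -> odd (prmax (tset i)) = a ->
    tangle_esc U (tset i) a != set0 -> tangle_esc U (tset i) a \subset Z ->
    attr_step U A a (Z, s)
      (tset i :|: Z,
       fun v => if [&& v \in tset i, own v == a & s v == None]
                then Some (tsig i v) else s v).

Inductive attr_reach (U A : {set V}) (a : bool) : astate -> astate -> Prop :=
| AttrRefl st : attr_reach U A a st st
| AttrTrans st1 st2 st3 :
    attr_step U A a st1 st2 -> attr_reach U A a st2 st3 -> attr_reach U A a st1 st3.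

Definition tattr (U A : {set V}) (a : bool) (Z : {set V}) (s : V -> option V) : Prop :=
  attr_reach U A a (A, fun _ => None) (Z, s) /\
  (forall Z' s', attr_step U A a (Z, s) (Z', s') -> Z' = Z /\ s' =1 s).

(* top-down a-maximal decomposition of the subgame with vertex set U:
   list of regions (as lists of vertices) with their strategies *)
Inductive topdown : {set V} -> seq (seq V * (V -> option V)) -> Prop :=
| TDnil : topdown set0 [::]
| TDcons (U : {set V}) (r : seq V) (s : V -> option V) rest :
    U != set0 ->
    tattr U [set v in U | pr v == prmax U] (odd (prmax U)) [set x in r] s ->
    topdown (U :\: [set x in r]) rest ->
    topdown U ((r, s) :: rest).

Variable tesc : 'I_k -> seq V.

Definition valid_tangles : Prop :=
  (forall i, [/\ uniq (tv i), is_tangle (tset i) (tsig i), uniq (tesc i) &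
                 [set x in tesc i] = tangle_esc setT (tset i) (odd (prmax (tset i)))])
  /\ (forall i j, tset i = tset j -> i = j).

End Spec.

(* The algorithm, in an explicit unit-cost model: every function returns its *)
(* result together with the number of elementary steps it performs.  Arrays *)
(* indexed by vertices / tangles are modelled by functions; a read or write *)
(* of one cell, a comparison, an arithmetic operation or a list cons/uncons *)
(* costs O(1); every loop iteration is charged at least one step; allocating *)
(* an array of size N is charged N steps.                                    *)

Definition cfold {A S : Type} (f : S -> A -> S * nat) (l : seq A) (s0 : S) : S * nat :=
  foldl (fun sc a => let: (s', c') := f sc.1 a in (s', sc.2 + c'.+1)) (s0, 0) l.

Section Alg.
Variables (n k : nat) (own : 'I_n -> bool) (pr : 'I_n -> nat)
          (succ : 'I_n -> seq 'I_n) (tv tesc : 'I_k -> seq 'I_n)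
          (tsig : 'I_k -> 'I_n -> 'I_n).
Local Notation V := 'I_n.
Local Notation K := 'I_k.

Definition preds_comp : (V -> seq V) * nat :=
  cfold (fun P u => cfold (fun P v => (updf P v (u :: P v), 0)) (succ u) P)
        (enum V) (fun _ => [::]).

Record rstate := RS {
  inZ : V -> bool; sgm : V -> option V; cnt : V -> nat;
  tc : K -> nat; tact : K -> bool; tix : V -> seq K;
  que : seq V; reg : seq V }.

Definition set_sgm st v x :=
  RS (inZ st) (updf (sgm st) v x) (cnt st) (tc st) (tact st) (tix st) (que st) (reg st).
Definition set_cnt st v x :=
  RS (inZ st) (sgm st) (updf (cnt st) v x) (tc st) (tact st) (tix st) (que st) (reg st).
Definition set_tc st i x :=
  RS (inZ st) (sgm st) (cnt st) (updf (tc st) i x) (tact st) (tix st) (que st) (reg st).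
Definition set_tact st i x :=
  RS (inZ st) (sgm st) (cnt st) (tc st) (updf (tact st) i x) (tix st) (que st) (reg st).
Definition set_tix st t :=
  RS (inZ st) (sgm st) (cnt st) (tc st) (tact st) t (que st) (reg st).
Definition set_que st q :=
  RS (inZ st) (sgm st) (cnt st) (tc st) (tact st) (tix st) q (reg st).
Definition push st v :=
  RS (updf (inZ st) v true) (sgm st) (cnt st) (tc st) (tact st) (tix st)
     (v :: que st) (v :: reg st).

Section Region.
Variables (P : V -> seq V) (rem : V -> bool).

Definition maxpr : nat * nat :=
  cfold (fun p v => (if rem v then maxn p (pr v) else p, 0)) (enum V) 0.

Variables (p : nat).
Local Notation a := (odd p).

Definition st0 : rstate :=
  RS (fun _ => false) (fun _ => None) (fun _ => 0) (fun _ => 0) (fun _ => false)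
     (fun _ => [::]) [::] [::].

Definition init_vertices (st : rstate) : rstate * nat :=
  cfold (fun st v =>
    if rem v then
      let: (c, cc) := cfold (fun c u => (if rem u then c.+1 else c, 0)) (succ v) 0 in
      let st := set_cnt st v c in
      (if pr v == p then push st v else st, cc)
    else (st, 0)) (enum V) st.

Definition init_tangles (st : rstate) : rstate * nat :=
  cfold (fun st i =>
    let: (inG, c1) := cfold (fun b v => (b && rem v, 0)) (tv i) true in
    let: (tp, c2) := cfold (fun q v => (maxn q (pr v), 0)) (tv i) 0 in
    if inG && (odd tp == a) then
      let: (ct, c3) := cfold (fun ct v =>
          if rem v then ((ct.1.+1, updf ct.2 v (i :: ct.2 v)), 0) else (ct, 0))
          (tesc i) (0, tix st) in
      let st := set_tix st ct.2 in
      let st := set_tc st i ct.1 in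
      (set_tact st i (ct.1 != 0), c1 + c2 + c3)
    else (st, c1 + c2)) (enum K) st.

Definition hpred (w u : V) (st : rstate) : rstate :=
  if rem u then
    if ~~ inZ st u then
      if own u == a then push (set_sgm st u (Some w)) u
      else let c := (cnt st u).-1 in
           if c == 0 then push (set_cnt st u 0) u else set_cnt st u c
    else if (own u == a) && (sgm st u == None) then set_sgm st u (Some w) else st
  else st.

Definition hvert (i : K) (v : V) (st : rstate) : rstate :=
  let st := if (own v == a) && (sgm st v == None)
            then set_sgm st v (Some (tsig i v)) else st in
  if ~~ inZ st v then push st v else st.

Definition htan (st : rstate) (i : K) : rstate * nat :=
  let c := (tc st i).-1 in
  let st := set_tc st i c in
  if (c == 0) && tact st i then
    cfold (fun st v => (hvert i v st, 0)) (tv i) (set_tact st i false)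
  else (st, 0).

Definition handle (w : V) (st : rstate) : rstate * nat :=
  let: (st1, c1) := cfold (fun st u => (hpred w u st, 0)) (P w) st in
  let: (st2, c2) := cfold htan (tix st1 w) st1 in
  (st2, c1 + c2).

Fixpoint process (fuel : nat) (st : rstate) : rstate * nat :=
  match fuel with
  | 0 => (st, 0)
  | f.+1 =>
    match que st with
    | [::] => (st, 1)
    | w :: q =>
      let: (st1, c1) := handle w (set_que st q) in
      let: (st2, c2) := process f st1 in
      (st2, c1 + c2 + 1)
    end
  end.

End Region.

Definition region (P : V -> seq V) (rem : V -> bool)
  : (seq V * (V -> option V) * (V -> bool)) * nat :=
  let: (p, c0) := maxpr rem in
  let: (st1, c1) := init_vertices rem p st0 in
  let: (st2, c2) := init_tangles rem p st1 in
  let: (st3, c3) := process P rem p n.+1 st2 in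
  let: (rem', c4) := cfold (fun r v => (updf r v false, 0)) (reg st3) rem in
  ((reg st3, sgm st3, rem'), c0 + (n + k) + c1 + c2 + c3 + c4).

Fixpoint td_loop (fuel : nat) (P : V -> seq V) (rem : V -> bool)
  : seq (seq V * (V -> option V)) * nat :=
  match fuel with
  | 0 => ([::], 0)
  | f.+1 =>
    let: (ne, c0) := cfold (fun b v => (b || rem v, 0)) (enum V) false in
    if ~~ ne then ([::], c0.+1) else
    let: (rs, c1) := region P rem in
    let: (r, s, rem') := rs in
    let: (rest, c2) := td_loop f P rem' in
    ((r, s) :: rest, c0 + c1 + c2 + 1)
  end.

Definition topdown_alg : seq (seq V * (V -> option V)) * nat :=
  let: (P, c0) := preds_comp in
  let: (out, c1) := td_loop n.+1 P (fun _ => true) in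
  (out, c0 + n + c1).

End Alg.

(** The algorithm computes each region with the classical counter-based
    attractor: every vertex of the opponent keeps the number of its successors
    not yet attracted, every tangle keeps the number of its escapes not yet
    attracted, and a vertex (tangle) is attracted when the counter reaches 0.
    Correctness follows from a loop invariant relating the concrete state to a
    run of [attr_step] and from the fact that an empty queue means saturation.
    For the cost, each vertex is dequeued at most once per region, and handling
    it costs its number of predecessors plus the number of tangles it escapes
    to; each tangle is attracted at most once, at cost its size.  Hence a region
    costs O(m + n|T|), and since the top priority strictly decreases from one
    region to the next there are at most d + 1 regions. *)

From mathcomp Require Import all_boot zify.
From Stdlib Require Import FunctionalExtensionality Lia.
Set Implicit Arguments. Unset Strict Implicit. Unset Printing Implicit Defensive.

Section CostedFold.
Variables (A S : Type) (f : S -> A -> S * nat).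

Lemma cfold_rcons l a s0 :
  cfold f (rcons l a) s0 =
  ((f (cfold f l s0).1 a).1, (cfold f l s0).2 + (f (cfold f l s0).1 a).2.+1).
Proof.
rewrite /cfold foldl_rcons.
by case: (foldl _ _ l) => s c /=; case: (f s a).
Qed.

Lemma cfold_ind l s0 (P : seq A -> S -> nat -> Prop) (G : Prop) :
  P [::] s0 0 ->
  (forall l1 a l2 s c, l = l1 ++ a :: l2 -> P l1 s c ->
      P (rcons l1 a) (f s a).1 (c + (f s a).2.+1)) ->
  (P l (cfold f l s0).1 (cfold f l s0).2 -> G) -> G.
Proof.
move=> P0 PS; apply.
suff: forall l1 l2, l = l1 ++ l2 -> P l1 (cfold f l1 s0).1 (cfold f l1 s0).2.
  by move/(_ l [::]); rewrite cats0; apply.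
elim/last_ind => [|l1 a IH] l2 E; first exact: P0.
rewrite cfold_rcons; apply: (PS l1 a l2); first by rewrite E cat_rcons.
by apply: (IH (a :: l2)); rewrite E cat_rcons.
Qed.

Lemma cfold_fst l s0 : (cfold f l s0).1 = foldl (fun s a => (f s a).1) s0 l.
Proof.
by elim/last_ind: l => [|l a IH] //; rewrite cfold_rcons foldl_rcons /= IH.
Qed.

Lemma cfold_snd (c : A -> nat) l s0 :
  (forall s a, (f s a).2 = c a) -> (cfold f l s0).2 = \sum_(a <- l) (c a).+1.
Proof.
move=> fc; elim/last_ind: l => [|l a IH]; first by rewrite big_nil.
by rewrite cfold_rcons /= fc IH -cats1 big_cat big_seq1.
Qed.

Lemma cfold_snd0 l s0 : (forall s a, (f s a).2 = 0) -> (cfold f l s0).2 = size l.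
Proof. by move=> f0; rewrite (cfold_snd _ _ f0) sum1_size. Qed.

End CostedFold.

Lemma foldl_count T (r : pred T) l c0 :
  foldl (fun c u => if r u then c.+1 else c) c0 l = c0 + count r l.
Proof.
elim: l c0 => [|x l IH] c0 /=; first by rewrite addn0.
by rewrite IH; case: (r x); rewrite /= ?addn0 ?addnS.
Qed.

Lemma foldl_andb T (r : pred T) l b0 : foldl (fun b u => b && r u) b0 l = b0 && all r l.
Proof. by elim: l b0 => [|x l IH] b0 /=; rewrite ?andbT // IH andbA. Qed.

Lemma foldl_orb T (r : pred T) l b0 : foldl (fun b u => b || r u) b0 l = b0 || has r l.
Proof. by elim: l b0 => [|x l IH] b0 /=; rewrite ?orbF // IH orbA. Qed.

Lemma foldl_maxn_cond T (g : T -> nat) (r : pred T) l c0 :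
  foldl (fun c u => if r u then maxn c (g u) else c) c0 l =
  maxn c0 (\max_(u <- l | r u) g u).
Proof.
elim: l c0 => [|x l IH] c0 /=; first by rewrite big_nil maxn0.
by rewrite IH big_cons; case: (r x); rewrite ?maxnA.
Qed.

Lemma foldl_maxn T (g : T -> nat) l c0 :
  foldl (fun c u => maxn c (g u)) c0 l = maxn c0 (\max_(u <- l) g u).
Proof.
elim: l c0 => [|x l IH] c0 /=; first by rewrite big_nil maxn0.
by rewrite IH big_cons maxnA.
Qed.

Lemma foldl_updf_false (T : eqType) (r0 : T -> bool) (l : seq T) v :
  foldl (fun r x => updf r x false) r0 l v = r0 v && (v \notin l).
Proof.
elim: l r0 => [|x l IH] r0 /=; first by rewrite andbT.
by rewrite IH /updf in_cons negb_or; case: (v =P x); rewrite ?andbF.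
Qed.

Lemma updf_eq (I : eqType) X (f : I -> X) i x : updf f i x i = x.
Proof. by rewrite /updf eqxx. Qed.

Lemma updf_ne (I : eqType) X (f : I -> X) i x j : j != i -> updf f i x j = f j.
Proof. by rewrite /updf => /negbTE ->. Qed.

Lemma sum_size_updf_cons n T (P : 'I_n -> seq T) v x :
  \sum_(y : 'I_n) size (updf P v (x :: P v) y) = (\sum_(y : 'I_n) size (P y)).+1.
Proof.
rewrite (bigD1 v) //= [in RHS](bigD1 v) //= updf_eq addSn; congr (_.+1 + _).
by apply: eq_bigr => y /(updf_ne P (x :: P v)) ->.
Qed.

Lemma uniq_size_ord n (s : seq 'I_n) : uniq s -> size s <= n.
Proof. by move/card_uniqP <-; rewrite -[n in _ <= n]card_ord max_card. Qed.

Lemma uniq_cat_cons_notin (T : eqType) (l1 l2 : seq T) a : uniq (l1 ++ a :: l2) -> a \notin l1.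
Proof. by rewrite cat_uniq /= negb_or => /and3P [_ /andP []]. Qed.

Lemma count_mem_gt0 (T : eqType) (x : T) s : (0 < count_mem x s) = (x \in s).
Proof. by rewrite -has_count has_pred1. Qed.

Lemma count_drop_mem (T : eqType) (r h h' : pred T) (w : T) s :
  uniq s -> w \in s -> r w -> ~~ h w -> (forall x, h' x = h x || (x == w)) ->
  count (fun x => r x && ~~ h x) s = (count (fun x => r x && ~~ h' x) s).+1.
Proof.
move=> s_uniq ws rw hw h'E.
have := count_predUI (fun x => r x && ~~ h' x) (pred1 w) s.
have -> : count (predI (fun x => r x && ~~ h' x) (pred1 w)) s = 0.
  apply/eqP; rewrite -leqn0 leqNgt -has_count; apply/hasPn => x _ /=.
  by rewrite h'E; case: (x == w); rewrite /= ?andbF ?orbT ?andbF.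
rewrite addn0 (count_uniq_mem _ s_uniq) ws addn1 => <-.
apply: eq_count => x /=; rewrite h'E; case: (x =P w) => [->|] /=.
- by rewrite rw hw /= ?eqxx ?orbT.
- by move=> _; rewrite !orbF.
Qed.

Section ConsAt.
Variables (n : nat) (T : eqType).
Local Notation V := 'I_n.

Definition cons_at (u : T) (P : V -> seq T) (l : seq V) : V -> seq T :=
  foldl (fun P v => updf P v (u :: P v)) P l.

Lemma count_cons_at u P l v y :
  count_mem y (cons_at u P l v) = count_mem y (P v) + (y == u) * count_mem v l.
Proof.
rewrite /cons_at; elim: l P => [|x l IH] P /=; first by rewrite muln0 addn0.
rewrite IH /updf; case: (v =P x) => [->|/eqP vx] /=.
  by rewrite eqxx [u == y]eq_sym; lia.
by rewrite eq_sym in vx; rewrite (negbTE vx).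
Qed.

Lemma sum_size_cons_at u P l :
  \sum_v size (cons_at u P l v) = \sum_v size (P v) + size l.
Proof.
rewrite /cons_at; elim: l P => [|x l IH] P /=; first by rewrite addn0.
by rewrite IH sum_size_updf_cons addSnnS.
Qed.

End ConsAt.

Section Predecessors.
Variables (n : nat) (succ : 'I_n -> seq 'I_n).
Local Notation V := 'I_n.

Lemma preds_comp_fst : (preds_comp succ).1 =
  foldl (fun P u => cons_at u P (succ u)) (fun _ => [::]) (enum V).
Proof.
rewrite cfold_fst; elim: (enum V) (fun _ => [::]) => //= u l IH P.
by rewrite IH cfold_fst.
Qed.

Lemma count_preds_comp v u : count_mem u ((preds_comp succ).1 v) = count_mem v (succ u).
Proof.
rewrite preds_comp_fst.
suff -> : forall l P, count_mem u (foldl (fun P u => cons_at u P (succ u)) P l v) =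
    count_mem u (P v) + \sum_(x <- l) (u == x) * count_mem v (succ x).
  rewrite add0n big_enum (bigD1 u) //= eqxx mul1n big1 ?addn0 // => x.
  by rewrite eq_sym => /negbTE ->.
elim=> [|x l IH] P /=; first by rewrite big_nil addn0.
by rewrite IH count_cons_at big_cons addnA.
Qed.

Lemma sum_size_preds_comp : \sum_v size ((preds_comp succ).1 v) = nedges succ.
Proof.
rewrite preds_comp_fst.
suff -> : forall l P, \sum_v size (foldl (fun P u => cons_at u P (succ u)) P l v) =
    \sum_v size (P v) + \sum_(x <- l) size (succ x).
  by rewrite big1 // add0n big_enum.
elim=> [|x l IH] P /=; first by rewrite big_nil addn0.
by rewrite IH sum_size_cons_at big_cons addnA.
Qed.

Lemma cost_preds_comp : (preds_comp succ).2 = nedges succ + n.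
Proof.
rewrite (cfold_snd (c := fun u => size (succ u))); last by move=> P u; rewrite cfold_snd0.
rewrite big_enum /= (eq_bigr (fun u => size (succ u) + 1)) => [|u _]; last by rewrite addn1.
by rewrite big_split /= sum1_card card_ord.
Qed.

End Predecessors.

Section Decomposition.
Variables (n k : nat) (own : 'I_n -> bool) (pr : 'I_n -> nat) (succ : 'I_n -> seq 'I_n)
  (tv tesc : 'I_k -> seq 'I_n) (tsig : 'I_k -> 'I_n -> 'I_n).
Local Notation V := 'I_n.
Local Notation K := 'I_k.
Local Notation state := (rstate n k).

Hypothesis tv_uniq : forall i, uniq (tv i).
Hypothesis tesc_uniq : forall i, uniq (tesc i).
Hypothesis succ_uniq : forall v, uniq (succ v).
Hypothesis tesc_escapes : forall i,
  [set x in tesc i] = tangle_esc own succ setT (tset tv i) (odd (prmax pr (tset tv i))).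

Lemma prmax_tv j : prmax pr (tset tv j) = \max_(v <- tv j) pr v.
Proof. by rewrite (big_uniq _ (tv_uniq j)) /prmax; apply: eq_bigl => v; rewrite inE. Qed.

Section Region.
Variables (P : V -> seq V) (rem : V -> bool) (p : nat).
Local Notation a := (odd p).

Definition Vsub := [set v | rem v].
Definition Atop := [set v | rem v && (pr v == p)].

Definition init_vertex (st : state) (v : V) : state :=
  if rem v then
    let st := set_cnt st v (count rem (succ v)) in if pr v == p then push st v else st
  else st.

Lemma init_verticesE st :
  init_vertices pr succ rem p st =
  (foldl init_vertex st (enum V), \sum_v (rem v * size (succ v)).+1).
Proof.
rewrite /init_vertices; set f := (X in cfold X).
have fE s v : f s v = (init_vertex s v, rem v * size (succ v)).
  rewrite /f /init_vertex; case: (rem v) => //=; rewrite mul1n.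
  by rewrite [cfold _ _ _]surjective_pairing cfold_fst foldl_count cfold_snd0.
rewrite [LHS]surjective_pairing cfold_fst (cfold_snd (c := fun v => rem v * size (succ v)));
  last by move=> s v; rewrite fE.
rewrite big_enum; congr pair; congr foldl.
by do 2 apply: functional_extensionality => ?; rewrite fE.
Qed.

Lemma init_vertices_spec (st := foldl init_vertex (st0 n k) (enum V)) :
  [/\ forall v, inZ st v = rem v && (pr v == p),
      forall v, rem v -> cnt st v = count rem (succ v),
      [/\ sgm st = (fun _ => None), tc st = (fun _ => 0), tact st = (fun _ => false)
        & tix st = (fun _ => [::])],
      que st = reg st
    & uniq (que st) /\ forall v, (v \in que st) = inZ st v].
Proof.
suff inv l : uniq l -> let s := foldl init_vertex (st0 n k) l in
  [/\ forall v, inZ s v = [&& v \in l, rem v & pr v == p],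
      forall v, v \in l -> rem v -> cnt s v = count rem (succ v),
      [/\ sgm s = (fun _ => None), tc s = (fun _ => 0), tact s = (fun _ => false)
        & tix s = (fun _ => [::])],
      que s = reg s
    & uniq (que s) /\ forall v, (v \in que s) = inZ s v].
  have [Z C F Q U] := inv _ (enum_uniq V).
  by split=> // v; rewrite ?Z ?mem_enum //; apply: C; rewrite mem_enum.
elim/last_ind: l => [|l x IH] //; rewrite rcons_uniq foldl_rcons => /andP [xl /IH].
set s := foldl _ _ l => -[Z C F Q [U M]].
have inZx : inZ s x = false by rewrite Z (negbTE xl).
rewrite /init_vertex; case rx: (rem x); last first.
  split=> // v; rewrite mem_rcons in_cons; case: (v =P x) => [->|_] /=.
  - by rewrite Z rx andbF.
  - exact: Z.
  - by rewrite rx.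
  - exact: C.
have cntE v : v \in rcons l x -> rem v ->
    updf (cnt s) x (count rem (succ x)) v = count rem (succ v).
  by rewrite mem_rcons in_cons /updf; case: (v =P x) => [->|_ /= vl] //; apply: C.
case px: (pr x == p); split=> //=.
- move=> v; rewrite /updf mem_rcons in_cons Z.
  by case: (v =P x) => [->|] //=; rewrite rx px.
- by rewrite Q.
- split; first by rewrite U andbT M inZx.
  by move=> v; rewrite in_cons M /updf; case: (v =P x).
- move=> v; rewrite mem_rcons in_cons Z.
  by case: (v =P x) => [->|] //=; rewrite rx px andbF (negbTE xl).
Qed.

Definition eligible (j : K) := (tset tv j \subset Vsub) && (odd (prmax pr (tset tv j)) == a).

Definition activate (st : state) (j : K) : state :=
  let c := count rem (tesc j) in
  set_tact (set_tc (set_tix st (cons_at j (tix st) [seq v <- tesc j | rem v])) j c) j (c != 0).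

Definition init_tangle (st : state) (j : K) : state :=
  if eligible j then activate st j else st.

Lemma eligibleE j : eligible j = all rem (tv j) && (odd (\max_(v <- tv j) pr v) == a).
Proof.
rewrite /eligible prmax_tv; congr andb; apply/subsetP/allP => sub v; move: (sub v).
- by rewrite !inE; apply.
- by rewrite !inE => /[apply].
Qed.

Lemma index_escapes_cfold (j : K) l c0 T0 :
  (cfold (fun ct v => if rem v then ((ct.1.+1, updf ct.2 v (j :: ct.2 v)), 0) else (ct, 0))
     l (c0, T0)).1 = (c0 + count rem l, cons_at j T0 [seq v <- l | rem v]).
Proof.
rewrite cfold_fst; elim: l c0 T0 => [|v l IH] c0 T0 /=; first by rewrite addn0.
by case: (rem v) => /=; rewrite IH ?addSnnS.
Qed.

Lemma init_tanglesE st :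
  init_tangles pr tv tesc rem p st =
  (foldl init_tangle st (enum K), \sum_j (2 * size (tv j) + eligible j * size (tesc j)).+1).
Proof.
rewrite /init_tangles; set f := (X in cfold X).
have fE s j : f s j = (init_tangle s j, 2 * size (tv j) + eligible j * size (tesc j)).
  rewrite /f /init_tangle eligibleE.
  rewrite [cfold _ (tv j) true]surjective_pairing cfold_fst foldl_andb cfold_snd0 //=.
  rewrite [cfold _ (tv j) 0]surjective_pairing cfold_fst foldl_maxn cfold_snd0 //= max0n.
  case: ifP => _ /=; last by rewrite mul0n addn0 addnn -mul2n.
  rewrite [cfold _ (tesc j) _]surjective_pairing index_escapes_cfold cfold_snd0 /=;
    last by move=> ? ?; case: ifP.
  by rewrite add0n mul1n addnn -mul2n.
rewrite [LHS]surjective_pairing cfold_fst (cfold_snd (c := fun j =>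
  2 * size (tv j) + eligible j * size (tesc j))); last by move=> s j; rewrite fE.
rewrite big_enum; congr pair; congr foldl.
by do 2 apply: functional_extensionality => ?; rewrite fE.
Qed.

Lemma init_tangles_fold l st (s := foldl init_tangle st l) :
  [/\ [/\ inZ s = inZ st, sgm s = sgm st, cnt s = cnt st, que s = que st & reg s = reg st],
      forall j w, count_mem j (tix s w) = count_mem j (tix st w) +
        \sum_(i <- l | eligible i) (j == i) * count_mem w [seq v <- tesc i | rem v],
      forall j, tc s j = if (j \in l) && eligible j then count rem (tesc j) else tc st j,
      forall j, tact s j =
        if (j \in l) && eligible j then count rem (tesc j) != 0 else tact st j
    & \sum_w size (tix s w) =
        \sum_w size (tix st w) + \sum_(i <- l | eligible i) count rem (tesc i)].
Proof.
rewrite {}/s; elim: l st => [|i l IH] st /=.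
  by split=> [|j w|j|j|]; rewrite ?big_nil ?addn0.
have [[Z S C Q R] X T A Sz] := IH (init_tangle st i).
rewrite /init_tangle in Z S C Q R X T A Sz *; split.
- by rewrite Z S C Q R; case: ifP.
- move=> j w; rewrite X big_cons; case: ifP => _ //=.
  by rewrite count_cons_at addnA.
- move=> j; rewrite T in_cons; case ei: (eligible i); case: (j =P i) => [->|/eqP ji] /=;
    rewrite ?ei ?andbF ?orbT ?andbT ?updf_eq ?(updf_ne _ _ ji) //; by case: ifP.
- move=> j; rewrite A in_cons; case ei: (eligible i); case: (j =P i) => [->|/eqP ji] /=;
    rewrite ?ei ?andbF ?orbT ?andbT ?updf_eq ?(updf_ne _ _ ji) //; by case: ifP.
- rewrite Sz big_cons; case: ifP => _ //=.
  by rewrite sum_size_cons_at size_filter addnA.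
Qed.

Lemma init_tangles_spec st (s := foldl init_tangle st (enum K)) :
  tc st = (fun _ => 0) -> tact st = (fun _ => false) -> tix st = (fun _ => [::]) ->
  [/\ [/\ inZ s = inZ st, sgm s = sgm st, cnt s = cnt st, que s = que st & reg s = reg st],
      forall j w, count_mem j (tix s w) = [&& eligible j, rem w & w \in tesc j],
      forall j, eligible j -> tc s j = count rem (tesc j),
      forall j, tact s j = eligible j && (count rem (tesc j) != 0)
    & \sum_w size (tix s w) <= \sum_j size (tesc j)].
Proof.
move=> tc0 tact0 tix0; have [F X T A Sz] := init_tangles_fold (enum K) st.
split=> [//|j w|j ej|j|].
- rewrite X tix0 add0n big_enum_cond big_mkcond (bigD1 j) //= eqxx mul1n big1 => [|i /negbTE ij];
    last by rewrite eq_sym ij; case: ifP.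
  by rewrite addn0 count_uniq_mem ?filter_uniq // mem_filter; case: (eligible j).
- by rewrite T mem_enum ej.
- by rewrite A mem_enum tact0 /=; case: (eligible j).
- rewrite Sz tix0 big1 // add0n big_enum_cond big_mkcond /=.
  by apply: leq_sum => i _; case: ifP => // _; apply: count_size.
Qed.

Hypothesis P_preds : forall v u, count_mem u (P v) = count_mem v (succ u).

Lemma mem_P w u : (u \in P w) = (w \in succ u).
Proof. by rewrite -count_mem_gt0 P_preds count_mem_gt0. Qed.

Lemma uniq_P w : uniq (P w).
Proof.
by apply: count_mem_uniq => x; rewrite P_preds (count_uniq_mem _ (succ_uniq x)) mem_P.
Qed.

Lemma esc_eligible j v : eligible j ->
  (v \in tangle_esc own succ Vsub (tset tv j) a) = rem v && (v \in tesc j).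
Proof.
move=> /andP [_ /eqP odd_j]; have := tesc_escapes j; rewrite odd_j => /setP /(_ v).
by rewrite /tangle_esc !inE => ->.
Qed.

Definition attracted (st : state) := [set v | inZ st v].
Definition abstract (st : state) : astate n := (attracted st, sgm st).
Local Notation step := (attr_step own pr succ tv tsig Vsub Atop a).
Local Notation reach := (attr_reach own pr succ tv tsig Vsub Atop a).
Definition reachable (st : state) := reach (Atop, fun _ => None) (abstract st).

Lemma reach_rstep x y z : reach x y -> step y z -> reach x z.
Proof.
elim=> [s|s1 s2 s3 s12 _ IH] s3z; last exact: AttrTrans s12 (IH s3z).
by apply: AttrTrans s3z _; apply: AttrRefl.
Qed.

Definition handled (st : state) v := inZ st v && (v \notin que st).

Definition queue_inv (st : state) :=
  [/\ forall v, inZ st v -> rem v, uniq (reg st), forall v, (v \in reg st) = inZ st v,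
      uniq (que st) & forall v, v \in que st -> inZ st v].

Definition potential (R : pred V) (wt : V -> nat) (st : state) :=
  \sum_(v | R v && ~~ inZ st v) wt v + \sum_(v <- que st) wt v.

Lemma push_queue_inv st u : queue_inv st -> rem u -> ~~ inZ st u -> queue_inv (push st u).
Proof.
move=> [Zrem reg_uniq regZ que_uniq queZ] ru Zu; split=> /=.
- by move=> v; rewrite /updf; case: (v =P u) => [->|_]; [| apply: Zrem].
- by rewrite reg_uniq regZ Zu.
- by move=> v; rewrite in_cons regZ /updf; case: (v =P u).
- by rewrite que_uniq andbT; apply/negP => /queZ; apply/negP.
- by move=> v; rewrite in_cons /updf; case: (v =P u) => //= _; apply: queZ.
Qed.

Lemma potential_push (R : pred V) wt st u :
  R u -> ~~ inZ st u -> potential R wt (push st u) = potential R wt st.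
Proof.
move=> Ru Zu; rewrite /potential /= big_cons [in RHS](bigD1 u) /=; last by rewrite Ru Zu.
have -> : \sum_(v | R v && ~~ updf (inZ st) u true v) wt v =
          \sum_(v | (R v && ~~ inZ st v) && (v != u)) wt v.
  by apply: eq_bigl => v; rewrite /updf; case: (v =P u) => [->|]; rewrite ?andbF ?andbT.
by rewrite addnCA addnA.
Qed.

Lemma potential_pop (R : pred V) wt st w q :
  que st = w :: q -> potential R wt st = wt w + potential R wt (set_que st q).
Proof. by move=> qE; rewrite /potential /= qE big_cons addnCA. Qed.

Lemma potential_le (R : pred V) wt st : queue_inv st -> potential R wt st <= \sum_v wt v.
Proof.
move=> [_ _ _ que_uniq queZ].
rewrite /potential (big_uniq _ que_uniq) !big_mkcond [X in _ + X]big_mkcond -big_split /=.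
apply: leq_sum => v _; case qv: (v \in que st); last by rewrite addn0; case: ifP.
by rewrite (queZ v qv) andbF add0n.
Qed.

Lemma handled_push st u : ~~ inZ st u -> handled (push st u) =1 handled st.
Proof.
by move=> Zu v; rewrite /handled /= /updf in_cons; case: (v =P u) => [->|] /=; rewrite ?(negbTE Zu).
Qed.

Lemma attracted_push st u : attracted (push st u) = u |: attracted st.
Proof. by apply/setP => v; rewrite !inE /= /updf; case: (v =P u). Qed.

(* [H] is the set of handled vertices; the queue head already counts as handled
   while it is being processed. *)
Definition counter_inv (st : state) (H : pred V) u :=
  if own u == a then forall x, x \in succ u -> ~~ H x
  else cnt st u = count (fun x => rem x && ~~ H x) (succ u) /\ 0 < cnt st u.

Definition unset_strategy_inv (st : state) (H : pred V) u :=
  inZ st u -> own u = a -> sgm st u = None -> u \in Atop /\ forall x, x \in succ u -> ~~ H x.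

Definition vertex_inv (st : state) H u :=
  (rem u -> ~~ inZ st u -> counter_inv st H u) /\ unset_strategy_inv st H u.

Definition tangle_attracted (st : state) j :=
  forall v, v \in tv j -> inZ st v /\ (own v = a -> sgm st v != None).

Definition tangle_inv (st : state) (Hf : K -> pred V) :=
  [/\ forall j, eligible j -> tc st j = count (fun x => rem x && ~~ Hf j x) (tesc j),
      forall j, tact st j -> [/\ eligible j, has rem (tesc j) & 0 < tc st j]
    & forall j, eligible j -> has rem (tesc j) -> ~~ tact st j -> tangle_attracted st j].

Definition tix_inv (st : state) :=
  forall j w, count_mem j (tix st w) = [&& eligible j, rem w & w \in tesc j].

Definition top_attracted (st : state) := forall v, v \in Atop -> inZ st v.

Definition active_size (st : state) := \sum_(j | tact st j) size (tv j).

Definition grows (st st' : state) :=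
  [/\ forall v, inZ st v -> inZ st' v,
      forall v, sgm st v != None -> sgm st' v != None
    & tix st' = tix st].

Definition grows_tangles_fixed (st st' : state) :=
  [/\ grows st st', tc st' = tc st & tact st' = tact st].

Lemma grows_trans s1 s2 s3 : grows s1 s2 -> grows s2 s3 -> grows s1 s3.
Proof. by move=> [Z1 S1 T1] [Z2 S2 T2]; split=> [v /Z1/Z2|v /S1/S2|] //; rewrite T2. Qed.

Lemma grows_tangles_fixed_trans s1 s2 s3 :
  grows_tangles_fixed s1 s2 -> grows_tangles_fixed s2 s3 -> grows_tangles_fixed s1 s3.
Proof. by move=> [G1 C1 A1] [G2 C2 A2]; split; rewrite ?C2 ?A2 //; apply: grows_trans G2. Qed.

Lemma vertex_inv_eq st st' H u :
  inZ st' u = inZ st u -> sgm st' u = sgm st u -> cnt st' u = cnt st u ->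
  vertex_inv st H u -> vertex_inv st' H u.
Proof. by move=> Z S C; rewrite /vertex_inv /counter_inv /unset_strategy_inv Z S C. Qed.

Lemma vertex_inv_eq_handled st H1 H2 u :
  (forall x, x \in succ u -> H1 x = H2 x) -> vertex_inv st H1 u -> vertex_inv st H2 u.
Proof.
move=> H12 [CI SI]; split.
- move=> ru Zu; move: (CI ru Zu); rewrite /counter_inv; case: (own u == a).
  + by move=> nH x xu; rewrite -H12 //; apply: nH.
  + by rewrite (@eq_in_count _ _ (fun x => rem x && ~~ H2 x)) // => x xu /=; rewrite H12.
- move=> Zu ou su; have [Au nH] := SI Zu ou su; split=> // x xu; rewrite -H12 //; exact: nH.
Qed.

Lemma tangle_attracted_grows st st' j :
  grows st st' -> tangle_attracted st j -> tangle_attracted st' j.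
Proof. by move=> [Z S _] att v /att [Zv Sv]; split=> [|/Sv]; [apply: Z | apply: S]. Qed.

Lemma tangle_inv_grows st st' Hf :
  grows_tangles_fixed st st' -> tangle_inv st Hf -> tangle_inv st' Hf.
Proof.
move=> [G tcE tactE] [TC TA TT]; split=> [j|j|j ej hj]; rewrite ?tcE ?tactE; auto.
by move=> aj; apply: tangle_attracted_grows G _; apply: TT.
Qed.

Lemma tangle_inv_eq_handled st Hf1 Hf2 :
  (forall j, eligible j -> forall x, x \in tesc j -> Hf1 j x = Hf2 j x) ->
  tangle_inv st Hf1 -> tangle_inv st Hf2.
Proof.
move=> H12 [TC TA TT]; split=> // j ej; rewrite TC //.
by apply: eq_in_count => x xj /=; rewrite H12.
Qed.

Lemma hvert_spec j v st (st' := hvert own tsig p j v st) : rem v -> queue_inv st ->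
  [/\ forall x, inZ st' x = inZ st x || (x == v),
      forall x, sgm st' x = if [&& x == v, own x == a & sgm st x == None]
                            then Some (tsig j x) else sgm st x,
      queue_inv st',
      [/\ cnt st' = cnt st, tc st' = tc st, tact st' = tact st & tix st' = tix st] &
      handled st' =1 handled st /\
      forall (R : pred V) wt, (forall x, rem x -> R x) -> potential R wt st' = potential R wt st].
Proof.
move=> rv qinv; rewrite {}/st' /hvert.
set s0 := (if (own v == a) && _ then _ else _).
have [Z0 Q0 R0 F0] : [/\ inZ s0 = inZ st, que s0 = que st, reg s0 = reg st &
    [/\ cnt s0 = cnt st, tc s0 = tc st, tact s0 = tact st & tix s0 = tix st]].
  by rewrite /s0; case: ifP.
have S0 x : sgm s0 x = if [&& x == v, own x == a & sgm st x == None]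
                       then Some (tsig j x) else sgm st x.
  rewrite /s0; case: ifP => [/andP [ov sv]|nov] /=; rewrite /updf.
    by case: (x =P v) => [->|]; rewrite ?ov ?sv.
  by case: (x =P v) => [->|] //=; rewrite nov.
have qinv0 : queue_inv s0 by rewrite /queue_inv Z0 Q0 R0.
have hE : handled s0 =1 handled st by move=> x; rewrite /handled Z0 Q0.
have potE (R : pred V) wt : potential R wt s0 = potential R wt st by rewrite /potential Z0 Q0.
case: F0 => C0 T0 A0 X0; case: ifP => [Zv|/negbFE Zv].
- split.
  + by move=> x; rewrite /= /updf Z0; case: (x =P v) => [->|]; rewrite ?orbT ?orbF.
  + exact: S0.
  + exact: push_queue_inv.
  + by [].
  + split=> [x|R wt Rrem]; first by rewrite (handled_push Zv) hE.
    by rewrite potential_push ?potE //; apply: Rrem.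
- have rZv : inZ st v by rewrite -Z0.
  by split=> // x; rewrite Z0; case: (x =P v) => [->|]; rewrite ?orbT ?orbF.
Qed.

Lemma attract_tangle_spec j st (r := (cfold (fun s v => (hvert own tsig p j v s, 0)) (tv j) st).1) :
  eligible j -> queue_inv st ->
  [/\ forall v, inZ r v = inZ st v || (v \in tv j),
      forall v, sgm r v = if [&& v \in tv j, own v == a & sgm st v == None]
                          then Some (tsig j v) else sgm st v,
      queue_inv r,
      [/\ cnt r = cnt st, tc r = tc st, tact r = tact st & tix r = tix st] &
      handled r =1 handled st /\
      forall (R : pred V) wt, (forall x, rem x -> R x) -> potential R wt r = potential R wt st].
Proof.
rewrite eligibleE => /andP [/allP tv_rem _]; rewrite {}/r cfold_fst.
elim: (tv j) tv_rem st => [|x l IH] l_rem st qinv /=.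
  by split=> // v; rewrite ?orbF //; case: ifP.
have [Zx Sx qx [Cx Tx Ax Xx] [hx px]] := hvert_spec j (l_rem x (mem_head _ _)) qinv.
have [|Z S Q [C T A X] [h pot]] := IH _ (hvert own tsig p j x st) qx.
  by move=> y yl; apply: l_rem; rewrite inE yl orbT.
split.
- by move=> v; rewrite Z Zx in_cons orbA.
- move=> v; rewrite S !Sx in_cons.
  case: (v =P x) => [->|] //=.
  by case: (own x == a); case E: (sgm st x == None); rewrite /= ?E ?andbF.
- exact: Q.
- by rewrite C T A X.
- by split=> [v|R wt Rrem]; rewrite ?h ?hx ?pot ?px.
Qed.

Section HandleVertex.
Variables (w : V) (Hold H : pred V).
Hypothesis H_def : forall x, H x = Hold x || (x == w).
Hypothesis rem_w : rem w.
Hypothesis Hold_w : ~~ Hold w.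

Definition pred_step_post u (st st' : state) :=
  [/\ reachable st', queue_inv st', vertex_inv st' H u, handled st' =1 H
    & forall v, v != u -> [/\ inZ st' v = inZ st v, sgm st' v = sgm st v & cnt st' v = cnt st v]]
  /\ grows_tangles_fixed st st' /\
  forall (R : pred V) wt, (rem u -> R u) -> potential R wt st' = potential R wt st.

Lemma pred_step_refl u st : reachable st -> queue_inv st -> handled st =1 H ->
  vertex_inv st H u -> pred_step_post u st st.
Proof. by move=> *; split; split. Qed.

Lemma pred_step_set_strategy u st :
  w \in succ u -> inZ st u -> own u = a -> sgm st u = None -> inZ st w ->
  reachable st -> queue_inv st -> vertex_inv st Hold u -> handled st =1 H ->
  pred_step_post u st (set_sgm st u (Some w)).
Proof.
move=> wu Zu ou su Zw reach_st qinv [_ SI] hH; have [Au _] := SI Zu ou su.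
split; last split.
- split=> //.
  + by apply: reach_rstep reach_st _; apply: AttrA Au ou su _ wu; rewrite inE.
  + by split=> [|Zu' ou']; rewrite /= ?updf_eq ?Zu.
  + by move=> v vu; rewrite /= updf_ne.
- by split=> //; split=> //= v; rewrite /updf; case: (v == u).
- by [].
Qed.

Lemma pred_step_player u st :
  w \in succ u -> rem u -> ~~ inZ st u -> own u = a -> inZ st w ->
  reachable st -> queue_inv st -> handled st =1 H ->
  pred_step_post u st (push (set_sgm st u (Some w)) u).
Proof.
move=> wu ru Zu ou Zw reach_st qinv hH.
have Zu' : ~~ inZ (set_sgm st u (Some w)) u by [].
split; last split.
- split.
  + apply: reach_rstep reach_st _; rewrite /abstract attracted_push /=.
    by apply: AttrAlpha; rewrite ?inE.
  + exact: push_queue_inv.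
  + by split=> [|_ _]; rewrite /= ?updf_eq.
  + by move=> v; rewrite (handled_push Zu'); apply: hH.
  + by move=> v vu; rewrite /= !updf_ne.
- by split=> //; split=> //= v; rewrite /updf; case: (v == u).
- by move=> R wt Rru; rewrite potential_push //; apply: Rru.
Qed.

Lemma pred_step_opponent u st :
  w \in succ u -> rem u -> ~~ inZ st u -> own u = ~~ a ->
  reachable st -> queue_inv st -> vertex_inv st Hold u -> handled st =1 H ->
  pred_step_post u st (let c := (cnt st u).-1 in
    if c == 0 then push (set_cnt st u 0) u else set_cnt st u c).
Proof.
move=> wu ru Zu ou reach_st qinv [CI _] hH.
have oua : (own u == a) = false by rewrite ou; case: (a).
move: (CI ru Zu); rewrite /counter_inv oua => -[cntE _].
have cnt1E : (cnt st u).-1 = count (fun x => rem x && ~~ H x) (succ u).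
  by rewrite cntE (count_drop_mem (succ_uniq u) wu rem_w Hold_w H_def).
case: eqP => [cnt0|/eqP cnt_neq0] /=; last first.
  split; last by split.
  split=> //; last by move=> v vu; rewrite /= updf_ne.
  split=> [_ _|_ /eqP]; last by rewrite oua.
  by rewrite /counter_inv oua /= updf_eq -cnt1E lt0n.
have Zu' : ~~ inZ (set_cnt st u 0) u by [].
split; last split.
- split.
  + apply: reach_rstep reach_st _; rewrite /abstract attracted_push /=.
    apply: AttrOpp; rewrite ?inE // => x; rewrite !inE => rx xu.
    have : ~~ has (fun x => rem x && ~~ H x) (succ u) by rewrite has_count -cnt1E cnt0.
    by move/hasPn/(_ x xu); rewrite rx /= negbK -hH => /andP [].
  + exact: push_queue_inv.
  + by split=> [|Zu'' ou']; rewrite /= ?updf_eq //; move/eqP: ou'; rewrite oua.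
  + by move=> v; rewrite (handled_push Zu'); apply: hH.
  + by move=> v vu; rewrite /= !updf_ne.
- by split=> //; split=> //= v; rewrite /updf; case: (v == u).
- by move=> R wt Rru; rewrite potential_push //; apply: Rru.
Qed.

Lemma pred_step_ok u st :
  inZ st w -> u \in P w -> reachable st -> queue_inv st -> vertex_inv st Hold u ->
  handled st =1 H -> pred_step_post u st (hpred own rem p w u st).
Proof.
move=> Zw; rewrite mem_P => wu reach_st qinv VI hH; rewrite /hpred.
case ru: (rem u); last first.
  apply: pred_step_refl => //; split=> [|Zu]; first by rewrite ru.
  by have [/(_ u Zu)] := qinv; rewrite ru.
case Zu: (inZ st u) => /=.
- case: ifP => [/andP [/eqP ou /eqP su]|noA]; first exact: pred_step_set_strategy.
  apply: pred_step_refl => //; split=> [_|_ ou su]; first by rewrite Zu.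
  by rewrite ou su !eqxx in noA.
- case: ifP => [/eqP ou|/negbT oua]; first by apply: pred_step_player; rewrite ?Zu.
  by apply: pred_step_opponent; rewrite ?Zu //; move: oua; case: (own u); case: (a).
Qed.

Lemma pred_loop_ok st (r := (cfold (fun s u => (hpred own rem p w u s, 0)) (P w) st).1) :
  inZ st w -> reachable st -> queue_inv st -> (forall u, vertex_inv st Hold u) ->
  handled st =1 H ->
  [/\ reachable r, queue_inv r, (forall u, vertex_inv r H u), handled r =1 H &
      grows_tangles_fixed st r /\
      forall (R : pred V) wt, (forall x, rem x -> R x) -> potential R wt r = potential R wt st].
Proof.
move=> Zw reach_st qinv VI hH; rewrite {}/r cfold_fst.
suff inv l : uniq l -> {subset l <= P w} ->
  let s := foldl (fun s u => hpred own rem p w u s) st l in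
  [/\ reachable s, queue_inv s, (forall u, vertex_inv s (if u \in l then H else Hold) u),
      handled s =1 H &
      grows_tangles_fixed st s /\
      forall (R : pred V) wt, (forall x, rem x -> R x) -> potential R wt s = potential R wt st].
  have [? ? VI' ? ?] := inv _ (uniq_P w) (fun x xP => xP); split=> // u.
  move: (VI' u); case: ifP => // uP; apply: vertex_inv_eq_handled => x xu.
  rewrite H_def; case: (x =P w) => [xw|]; last by rewrite orbF.
  by rewrite mem_P -xw xu in uP.
elim/last_ind: l => [|l x IH]; first by [].
rewrite rcons_uniq foldl_rcons => /andP [xl /IH {}IH] sub.
have [|reach_s qinv_s VI_s hH_s [grow_s pot_s]] := IH.
  by move=> y yl; apply: sub; rewrite mem_rcons inE yl orbT.
have xP : x \in P w by apply: sub; rewrite mem_rcons mem_head.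
have [[Zw_s _ _] _ _] := grow_s.
have VIx_old := VI_s x; rewrite (negbTE xl) in VIx_old.
have [[reach' qinv' VIx hH' same] [grow' pot']] :=
  pred_step_ok (Zw_s _ Zw) xP reach_s qinv_s VIx_old hH_s.
split=> //.
- move=> u; rewrite mem_rcons in_cons; case: (u =P x) => [->|/eqP ux] //.
  by have [Z S C] := same u ux; apply: vertex_inv_eq Z S C _; apply: VI_s.
- split; first exact: grows_tangles_fixed_trans grow'.
  by move=> R wt Rrem; rewrite pot' ?pot_s //; apply: Rrem.
Qed.

Lemma count_escapes_dec (st : state) j (Hf Hf' : K -> pred V) :
  eligible j -> w \in tesc j -> Hf j =1 Hold -> Hf' j =1 H ->
  (forall i, i != j -> Hf' i =1 Hf i) ->
  (forall i, eligible i -> tc st i = count (fun x => rem x && ~~ Hf i x) (tesc i)) ->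
  forall i, eligible i ->
    updf (tc st) j (tc st j).-1 i = count (fun x => rem x && ~~ Hf' i x) (tesc i).
Proof.
move=> ej wj HfE Hf'E Hf'_ne TC i ei; rewrite /updf; case: (i =P j) => [->|/eqP ij].
- rewrite TC // (@eq_count _ _ (fun x => rem x && ~~ Hold x)) => [|x]; last by rewrite /= HfE.
  rewrite (count_drop_mem (tesc_uniq j) wj rem_w Hold_w H_def).
  by apply: eq_count => x /=; rewrite Hf'E.
- by rewrite TC //; apply: eq_count => x /=; rewrite Hf'_ne.
Qed.

Definition tangle_step_post j (Hf : K -> pred V) (st st' : state) c :=
  [/\ reachable st', queue_inv st', (forall u, vertex_inv st' H u), handled st' =1 H &
   [/\ forall Hf', Hf' j =1 H -> (forall i, i != j -> Hf' i =1 Hf i) -> tangle_inv st' Hf',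
       grows st st',
       forall (R : pred V) wt, (forall x, rem x -> R x) -> potential R wt st' = potential R wt st
     & c + active_size st' = active_size st]].

Lemma tangle_step_wait st j Hf :
  eligible j -> w \in tesc j -> Hf j =1 Hold -> ~~ (((tc st j).-1 == 0) && tact st j) ->
  reachable st -> queue_inv st -> (forall u, vertex_inv st H u) -> handled st =1 H ->
  tangle_inv st Hf -> tangle_step_post j Hf st (set_tc st j (tc st j).-1) 0.
Proof.
move=> ej wj HfE wait reach_st qinv VI hH [TC TA TT]; split=> //; split=> //.
move=> Hf' Hf'E Hf'_ne; split=> [|i|i ei hi ai].
- exact: count_escapes_dec.
- rewrite /= /updf; case: (i =P j) => [->|_] aj; have [? ? ?] := TA _ aj; split=> //.
  by rewrite lt0n; apply: contra wait => /eqP ->; rewrite aj.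
- exact: TT.
Qed.

Lemma tangle_step_fire st j Hf
    (s1 := set_tact (set_tc st j (tc st j).-1) j false)
    (r := (cfold (fun s v => (hvert own tsig p j v s, 0)) (tv j) s1).1) :
  eligible j -> w \in tesc j -> Hf j =1 Hold -> (tc st j).-1 = 0 -> tact st j ->
  reachable st -> queue_inv st -> (forall u, vertex_inv st H u) -> handled st =1 H ->
  tangle_inv st Hf -> tangle_step_post j Hf st r (size (tv j)).
Proof.
move=> ej wj HfE tc0 aj reach_st qinv VI hH [TC TA TT].
have [Zr Sr qinv_r [Cr Tr Ar Xr] [hr pot_r]] := attract_tangle_spec ej (qinv : queue_inv s1).
rewrite -/r /= in Zr Sr qinv_r Cr Tr Ar Xr hr pot_r.
have [_ hj _] := TA j aj.
have cntE : (tc st j).-1 = count (fun x => rem x && ~~ H x) (tesc j).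
  rewrite TC // (@eq_count _ (fun x => rem x && ~~ Hf j x) (fun x => rem x && ~~ Hold x));
    last by move=> x; rewrite /= HfE.
  by rewrite (count_drop_mem (tesc_uniq j) wj rem_w Hold_w H_def).
have no_esc : ~~ has (fun x => rem x && ~~ H x) (tesc j) by rewrite has_count -cntE tc0.
have grow : grows st r.
  by split=> [v Zv|v|//]; rewrite ?Zr ?Zv // Sr; case: ifP.
split.
- apply: reach_rstep reach_st _.
  have -> : abstract r = (tset tv j :|: attracted st, fun v =>
      if [&& v \in tset tv j, own v == a & sgm st v == None] then Some (tsig j v) else sgm st v).
    rewrite /abstract; congr pair; first by apply/setP => v; rewrite !inE Zr orbC.
    by apply: functional_extensionality => v; rewrite Sr inE.
  case/andP: (ej) => sub /eqP odd_j; apply: AttrTangle => //.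
  + by apply/set0Pn; have /hasP [x xj rx] := hj; exists x; rewrite esc_eligible // rx xj.
  + apply/subsetP => x; rewrite esc_eligible // inE => /andP [rx xj].
    by move/hasPn/(_ x xj): no_esc; rewrite rx /= negbK -hH => /andP [].
- exact: qinv_r.
- move=> u; case uj: (u \in tv j); last first.
    by apply: (@vertex_inv_eq st); rewrite ?Zr ?Sr ?Cr ?uj ?orbF.
  split=> [_|_ ou]; first by rewrite Zr uj orbT.
  by rewrite Sr uj ou eqxx /=; case: eqP.
- by move=> v; rewrite hr; apply: hH.
- split=> //; last first.
    rewrite /active_size Ar /= [in RHS](bigD1 j aj) /=; congr (_ + _).
    by apply: eq_bigl => i; rewrite /updf; case: (i =P j) => [->|]; rewrite ?andbF ?andbT.
  move=> Hf' Hf'E Hf'_ne; split=> [i ei|i|i ei hi].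
  + by rewrite Tr /=; apply: count_escapes_dec.
  + rewrite Ar /= /updf; case: (i =P j) => // /eqP ij ai.
    by have [? ? ?] := TA i ai; rewrite Tr /= updf_ne.
  + rewrite Ar /= /updf; case: (i =P j) => [->|/eqP ij] /= ai.
    * move=> v vj; rewrite Zr Sr vj orbT; split=> // ov; rewrite ov eqxx /=.
      by case: (sgm st v =P None) => // /eqP.
    * exact: tangle_attracted_grows grow (TT i ei hi ai).
Qed.

Lemma tangle_step_ok st j Hf (r := htan own tv tsig p st j) :
  eligible j -> w \in tesc j -> Hf j =1 Hold ->
  reachable st -> queue_inv st -> (forall u, vertex_inv st H u) -> handled st =1 H ->
  tangle_inv st Hf -> tangle_step_post j Hf st r.1 r.2.
Proof.
rewrite {}/r /htan; case: ifP => [/andP [/eqP tc0 aj]|/negbT wait].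
- by rewrite cfold_snd0 // => *; apply: tangle_step_fire.
- by move=> *; apply: tangle_step_wait.
Qed.

Lemma tangle_loop_ok st (L := tix st w) (r := cfold (htan own tv tsig p) L st) :
  tix_inv st -> reachable st -> queue_inv st -> (forall u, vertex_inv st H u) ->
  handled st =1 H -> tangle_inv st (fun _ => Hold) ->
  [/\ reachable r.1, queue_inv r.1, (forall u, vertex_inv r.1 H u), handled r.1 =1 H &
   [/\ tangle_inv r.1 (fun _ => H), grows st r.1,
       forall (R : pred V) wt, (forall x, rem x -> R x) -> potential R wt r.1 = potential R wt st
     & r.2 + active_size r.1 = active_size st + size L]].
Proof.
move=> tix_st reach_st qinv VI hH TI; rewrite {}/r.
have memL j : (j \in L) = [&& eligible j, rem w & w \in tesc j].
  by rewrite -count_mem_gt0 tix_st; case: (_ && _).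
have L_uniq : uniq L by apply: count_mem_uniq => j; rewrite tix_st memL.
apply: (@cfold_ind _ _ (htan own tv tsig p) L st
  (fun l s c => [/\ reachable s, queue_inv s, (forall u, vertex_inv s H u), handled s =1 H &
     [/\ tangle_inv s (fun j => if j \in l then H else Hold), grows st s,
         forall (R : pred V) wt, (forall x, rem x -> R x) -> potential R wt s = potential R wt st
       & c + active_size s = active_size st + size l]])).
- by split=> //; split=> //; rewrite addn0.
- move=> l1 j l2 s c Ldef [reach_s qinv_s VI_s hH_s [TI_s grow_s pot_s cost_s]].
  have jl1 : j \notin l1 by apply: (@uniq_cat_cons_notin _ _ l2); rewrite -Ldef.
  have /and3P [ej _ wj] : [&& eligible j, rem w & w \in tesc j].
    by rewrite -memL Ldef mem_cat mem_head orbT.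
  have HfE : (fun i => if i \in l1 then H else Hold) j =1 Hold by move=> x /=; rewrite (negbTE jl1).
  have [reach' qinv' VI' hH' [TI' grow' pot' cost']] :=
    tangle_step_ok ej wj HfE reach_s qinv_s VI_s hH_s TI_s.
  split=> //; split.
  + apply: TI' => [x|i ij x]; first by rewrite mem_rcons mem_head.
    by rewrite mem_rcons in_cons (negbTE ij).
  + exact: grows_trans grow'.
  + by move=> R wt Rrem; rewrite pot' // pot_s.
  + by rewrite size_rcons; move: cost' cost_s; lia.
- move=> [? ? ? ? [TI_r ? ? ?]]; split=> //; split=> //.
  apply: tangle_inv_eq_handled TI_r => j ej x xj; case: ifP => // jL.
  rewrite H_def; case: (x =P w) => [xw|]; last by rewrite orbF.
  by rewrite memL ej rem_w -xw xj in jL.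
Qed.

End HandleVertex.

Definition region_inv (st : state) :=
  [/\ reachable st, queue_inv st, top_attracted st /\ tix_inv st,
      forall u, vertex_inv st (handled st) u & tangle_inv st (fun _ => handled st)].

(* Handling a vertex costs its predecessors and the tangles it escapes to, attracting
   an active tangle costs its size, and every step pays one more unit. *)
Definition work (T0 : V -> seq K) (st : state) :=
  potential rem (fun v => (size (P v) + size (T0 v)).+1) st + active_size st.

Definition pending (st : state) := potential predT (fun _ => 1) st.

Lemma dequeue_spec st w q (st' := set_que st q) :
  que st = w :: q -> queue_inv st ->
  [/\ inZ st w, rem w, ~~ handled st w, queue_inv st'
    & forall x, handled st' x = handled st x || (x == w)].
Proof.
move=> qE [Zrem reg_uniq regZ que_uniq queZ].
have Zw : inZ st w by apply: queZ; rewrite qE mem_head.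
move: que_uniq; rewrite qE /= => /andP [wq q_uniq].
split=> //; first by apply: Zrem.
- by rewrite /handled qE mem_head andbF.
- by split=> // v vq; apply: queZ; rewrite qE in_cons vq orbT.
- move=> x; rewrite /handled /= qE in_cons; case: (x =P w) => [->|] /=.
  + by rewrite Zw wq orbT.
  + by rewrite !orbF.
Qed.

Lemma handle_ok st w q (r := handle own tv tsig P rem p w (set_que st q)) :
  que st = w :: q -> region_inv st ->
  [/\ region_inv r.1, tix r.1 = tix st, r.2.+1 + work (tix st) r.1 = work (tix st) st
    & pending r.1 < pending st].
Proof.
move=> qE [reach_st qinv [top_st tix_st] VI TI]; rewrite {}/r.
have [Zw rw hw qinv' hE] := dequeue_spec qE qinv.
set st' := set_que st q in qinv' hE *.
have [reach1 qinv1 VI1 hH1 [grow1 pot1]] :=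
  pred_loop_ok hE rw hw (Zw : inZ st' w) reach_st qinv' VI (fun x => erefl).
rewrite /handle; set s1 := (cfold _ (P w) st') in reach1 qinv1 VI1 hH1 grow1 pot1 *.
rewrite [s1]surjective_pairing cfold_snd0 // in reach1 qinv1 VI1 hH1 grow1 pot1 *.
have [[Z1 S1 X1] C1 A1] := grow1.
have TI1 : tangle_inv s1.1 (fun _ => handled st) by apply: tangle_inv_grows grow1 _.
have tix1 : tix_inv s1.1 by move=> j x; rewrite X1 tix_st.
have [reach2 qinv2 VI2 hH2 [TI2 [Z2 S2 X2] pot2 cost2]] :=
  tangle_loop_ok hE rw hw tix1 reach1 qinv1 VI1 hH1 TI1.
rewrite [cfold _ _ _]surjective_pairing /=.
set s2 := (cfold _ _ _).1 in reach2 qinv2 VI2 hH2 TI2 Z2 S2 X2 pot2 cost2 *.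
split.
- split=> //; first by split=> [v /top_st /Z1 /Z2|j x]; rewrite // X2 X1 tix_st.
  + by move=> u; apply: vertex_inv_eq_handled (VI2 u) => x _; rewrite hH2.
  + by apply: tangle_inv_eq_handled TI2 => j _ x _; rewrite hH2.
- by rewrite X2 X1.
- rewrite /work pot2 // pot1 // [in RHS](potential_pop _ _ qE) -/st'.
  have -> : active_size st = active_size s1.1 by rewrite /active_size A1.
  by rewrite X1 /st' /= in cost2 *; move: cost2; lia.
- by rewrite /pending pot2 // pot1 // (potential_pop _ _ qE).
Qed.

Lemma process_ok fuel st (r := process own tv tsig P rem p fuel st) :
  region_inv st -> pending st < fuel ->
  [/\ region_inv r.1, que r.1 = [::], tix r.1 = tix st
    & r.2 + work (tix st) r.1 = work (tix st) st + 1].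
Proof.
rewrite {}/r; elim: fuel st => [|f IH] st inv_st //= pend.
case qE: (que st) => [|w q] /=; first by split=> //; rewrite add1n addn1.
have [inv1 tix1 cost1 pend1] := handle_ok qE inv_st.
case: (handle _ _ _ _ _ _ _ _) inv1 tix1 cost1 pend1 => s1 c1 /= inv1 tix1 cost1 pend1.
have [|inv2 q2 tix2 cost2] := IH s1 inv1; first by move: pend pend1; lia.
case: (process _ _ _ _ _ _ _ _) inv2 q2 tix2 cost2 => s2 c2 /= inv2 q2 tix2 cost2.
by split=> //; [rewrite tix2 | move: cost2 cost1; rewrite tix1; lia].
Qed.

(* With an empty queue every attracted vertex is handled, so the counters witness
   that no rule of the tangle attractor applies any more. *)
Lemma saturated st : region_inv st -> que st = [::] ->
  forall Z' s', step (abstract st) (Z', s') -> Z' = attracted st /\ s' =1 sgm st.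
Proof.
move=> [_ _ [top_st _] VI [TC TA TT]] qE Z' s' st_step.
have hE x : handled st x = inZ st x by rewrite /handled qE andbT.
move: st_step; move E1: (abstract st) => ast; move E2: (Z', s') => ast' st_step.
have counter v (Z : {set V}) :
    v \in Vsub -> v \notin Z -> attracted st = Z -> counter_inv st (handled st) v.
  by move=> vU vZ ZE; rewrite inE in vU; rewrite -ZE inE in vZ; apply: (VI v).1.
case: st_step E1 E2.
- move=> Z s v u vU vZ ov uZ uv [ZE _] _; exfalso.
  move: (counter v Z vU vZ ZE); rewrite /counter_inv ov eqxx => /(_ u uv).
  by rewrite -ZE inE in uZ; rewrite hE uZ.
- move=> Z s v vU vZ ov all_Z [ZE _] _; exfalso.
  have oa : (own v == a) = false by rewrite ov; case: (a).
  move: (counter v Z vU vZ ZE); rewrite /counter_inv oa => -[cntE].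
  rewrite cntE -has_count => /hasP [x xv /andP [rx]].
  by rewrite hE; have := all_Z x; rewrite -ZE !inE => /(_ rx xv) ->.
- move=> Z s v u vA ov sv uZ uv [ZE sE] _; exfalso.
  rewrite -sE in sv; have [_ nH] := (VI v).2 (top_st v vA) ov sv.
  by move: (nH u uv); rewrite -ZE inE in uZ; rewrite hE uZ.
move=> Z s i sub odd_i esc0 escZ [ZE sE] [-> ->]; subst Z s.
have ei : eligible i by rewrite /eligible sub odd_i eqxx.
have hi : has rem (tesc i).
  by have /set0Pn [x] := esc0; rewrite esc_eligible // => /andP [rx xi]; apply/hasP; exists x.
have no_esc : count (fun x => rem x && ~~ handled st x) (tesc i) = 0.
  apply/eqP; rewrite -leqn0 leqNgt -has_count; apply/hasPn => x xi /=.
  apply/negP => /andP [rx]; rewrite hE => /negP; apply.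
  by have := subsetP escZ x; rewrite esc_eligible // rx xi inE; apply.
have ai : ~~ tact st i by apply/negP => /TA [_ _]; rewrite TC // no_esc.
have att := TT i ei hi ai.
split.
- by apply/setUidPr/subsetP => v; rewrite !inE => /att [].
- move=> v /=; case: ifP => // /and3P [vi /eqP ov /eqP sv].
  by rewrite inE in vi; have [_ /(_ ov)] := att v vi; rewrite sv.
Qed.

Definition init_state : state :=
  foldl init_tangle (foldl init_vertex (st0 n k) (enum V)) (enum K).

Lemma init_state_spec : (forall v, rem v -> has rem (succ v)) ->
  region_inv init_state /\ \sum_w size (tix init_state w) <= \sum_j size (tesc j).
Proof.
move=> rem_succ; rewrite /init_state.
have [Z1 C1 [S1 T1 A1 X1] Q1 [U1 M1]] := init_vertices_spec.
set st1 := foldl _ _ _ in Z1 C1 S1 T1 A1 X1 Q1 U1 M1 *.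
have [[Z2 S2 C2 Q2 R2] X2 T2 A2 Sz2] := init_tangles_spec T1 A1 X1.
set st2 := foldl _ _ _ in Z2 S2 C2 Q2 R2 X2 T2 A2 Sz2 *.
have unhandled x : handled st2 x = false by rewrite /handled Q2 Z2 -M1 andbN.
split=> //; split.
- rewrite /reachable (_ : abstract st2 = (Atop, fun _ => None)); first exact: AttrRefl.
  by rewrite /abstract S2 S1; congr pair; apply/setP => v; rewrite !inE Z2 Z1.
- split; rewrite ?Z2 ?Q2 ?R2 -?Q1 //; first by move=> v; rewrite Z1 => /andP [].
  by move=> v; rewrite M1.
- by split=> [v|//]; rewrite inE Z2 Z1.
- move=> u; split=> [ru _|Zu _ _]; last first.
    by split=> [|x _]; [move: Zu; rewrite Z2 Z1 inE | rewrite unhandled].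
  rewrite /counter_inv; case: ifP => _; first by move=> x _; rewrite unhandled.
  rewrite C2 (C1 u ru) -has_count rem_succ //; split=> //.
  by apply: eq_count => x /=; rewrite unhandled andbT.
- split=> [j ej|j|j ej hj].
  + by rewrite T2 //; apply: eq_count => x /=; rewrite unhandled andbT.
  + rewrite A2 => /andP [ej c0]; split=> //; first by rewrite has_count lt0n.
    by rewrite T2 // lt0n.
  + by rewrite A2 ej -lt0n -has_count hj.
Qed.

Lemma maxpr_spec : maxpr pr rem = (prmax pr Vsub, n).
Proof.
rewrite [LHS]surjective_pairing cfold_snd0 // size_enum_ord cfold_fst foldl_maxn_cond max0n.
by rewrite /prmax big_enum_cond; congr pair; apply: eq_bigl => v; rewrite !inE.
Qed.

Lemma regionE : p = prmax pr Vsub ->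
  region own pr succ tv tesc tsig P rem =
  let r := process own tv tsig P rem p n.+1 init_state in
  ((reg r.1, sgm r.1, fun v => rem v && (v \notin reg r.1)),
   n + (n + k) + \sum_v (rem v * size (succ v)).+1 +
   \sum_j (2 * size (tv j) + eligible j * size (tesc j)).+1 + r.2 + size (reg r.1)).
Proof.
move=> pE; rewrite /region maxpr_spec -pE init_verticesE; cbv beta iota.
rewrite init_tanglesE -/init_state; cbv beta iota zeta.
case: (process _ _ _ _ _ _ _ _) => s3 c3 /=.
rewrite [cfold _ _ rem]surjective_pairing cfold_snd0 // cfold_fst /=.
by congr ((_, _), _); apply: functional_extensionality => v; rewrite foldl_updf_false.
Qed.

Lemma pending_init_lt : (forall v, rem v -> has rem (succ v)) -> pending init_state < n.+1.
Proof.
move=> rem_succ; have [[_ qinv _ _ _] _] := init_state_spec rem_succ.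
by rewrite ltnS (leq_trans (potential_le _ _ qinv)) // sum1_card card_ord.
Qed.

Lemma region_spec (r := (process own tv tsig P rem p n.+1 init_state).1) :
  p = prmax pr Vsub -> (forall v, rem v -> has rem (succ v)) ->
  [/\ tattr own pr succ tv tsig Vsub [set v in Vsub | pr v == prmax pr Vsub]
        (odd (prmax pr Vsub)) [set v in reg r] (sgm r),
      forall v, v \in reg r -> rem v,
      forall v, rem v -> pr v = p -> v \in reg r
    & forall v, rem v && (v \notin reg r) -> has (fun u => rem u && (u \notin reg r)) (succ v)].
Proof.
move=> pE rem_succ; have [inv0 _] := init_state_spec rem_succ.
have [inv_r qE _ _] := process_ok inv0 (pending_init_lt rem_succ); rewrite -/r in inv_r qE.
have [reach_r [Zrem _ regZ _ _] [top_r _] VI_r _] := inv_r.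
have hE x : handled r x = inZ r x by rewrite /handled qE andbT.
split.
- rewrite -pE (_ : [set v in Vsub | pr v == p] = Atop); last by apply/setP => v; rewrite !inE.
  rewrite (_ : [set v in reg r] = attracted r); last by apply/setP => v; rewrite !inE regZ.
  by split=> //; apply: saturated inv_r qE.
- by move=> v; rewrite regZ; apply: Zrem.
- by move=> v rv pv; rewrite regZ; apply: top_r; rewrite inE rv pv eqxx.
- move=> v; rewrite regZ => /andP [rv Zv]; move: ((VI_r v).1 rv Zv); rewrite /counter_inv.
  case: ifP => _ => [nH|[cntE]].
  + have /hasP [x xv rx] := rem_succ v rv; apply/hasP; exists x => //.
    by rewrite regZ rx -hE nH.
  + rewrite cntE -has_count => /hasP [x xv /andP [rx hx]]; apply/hasP; exists x => //.
    by rewrite regZ rx -hE.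
Qed.

Lemma region_cost_le : p = prmax pr Vsub ->
  (forall v, rem v -> has rem (succ v)) -> \sum_v size (P v) = nedges succ ->
  (region own pr succ tv tesc tsig P rem).2 <= 5 * (n + nedges succ + k + k * n) + 1.
Proof.
move=> pE rem_succ sizeP; set m := nedges succ.
rewrite (regionE pE); set r := process _ _ _ _ _ _ _ _; cbn beta iota zeta delta [fst snd].
have [inv0 tix0] := init_state_spec rem_succ.
have [[_ qinv_r _ _ _] _ _ cost_r] := process_ok inv0 (pending_init_lt rem_succ).
have [_ qinv0 _ _ _] := inv0.
have sum_le (s : K -> seq V) : (forall j, uniq (s j)) -> \sum_j size (s j) <= k * n.
  move=> s_uniq; rewrite (@leq_trans (\sum_(j < k) n)) //; last by rewrite sum_nat_const card_ord.
  by apply: leq_sum => j _; apply: uniq_size_ord.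
have c1 : \sum_v (rem v * size (succ v)).+1 <= m + n.
  rewrite (eq_bigr (fun v => rem v * size (succ v) + 1)) => [|v _]; last by rewrite addn1.
  rewrite big_split /= sum1_card card_ord leq_add2r; apply: leq_sum => v _.
  by case: (rem v); rewrite ?mul1n ?mul0n.
have c2 : \sum_j (2 * size (tv j) + eligible j * size (tesc j)).+1 <= 3 * (k * n) + k.
  rewrite (@leq_trans (\sum_(j < k) (3 * n + 1))) //; last first.
    by rewrite sum_nat_const card_ord mulnDr muln1 mulnCA.
  apply: leq_sum => j _; have := uniq_size_ord (tv_uniq j); have := uniq_size_ord (tesc_uniq j).
  by case: (eligible j); rewrite ?mul1n ?mul0n; lia.
have work0 : work (tix init_state) init_state <= m + k * n + n + k * n.
  apply: leq_add; last first.
    rewrite /active_size big_mkcond /= (leq_trans _ (sum_le _ tv_uniq)) //.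
    by apply: leq_sum => j _; case: ifP.
  apply: leq_trans (potential_le _ _ qinv0) _.
  rewrite (eq_bigr (fun v => size (P v) + size (tix init_state v) + 1)) => [|v _];
    last by rewrite addn1.
  rewrite !big_split /= sum1_card card_ord sizeP leq_add2r leq_add2l.
  exact: leq_trans tix0 (sum_le _ tesc_uniq).
have c4 : size (reg r.1) <= n by apply: uniq_size_ord; case: qinv_r.
by move: c1 c2 work0 cost_r c4; rewrite /r; lia.
Qed.

End Region.

Section TopDown.
Variable P : V -> seq V.
Hypothesis P_preds : forall v u, count_mem u (P v) = count_mem v (succ u).
Hypothesis sizeP : \sum_v size (P v) = nedges succ.
Hypothesis n_le_m : n <= nedges succ.

Lemma region_step rem (p := prmax pr (Vsub rem)) (x := region own pr succ tv tesc tsig P rem) :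
  (forall v, rem v -> has rem (succ v)) ->
  [/\ tattr own pr succ tv tsig (Vsub rem) [set v in Vsub rem | pr v == p] (odd p)
        [set v in x.1.1.1] x.1.1.2,
      forall v, x.1.2 v = rem v && (v \notin x.1.1.1),
      forall v, x.1.2 v -> has x.1.2 (succ v),
      forall v, x.1.2 v -> pr v < p
    & 0 < n -> x.2 <= 11 * (nedges succ + n * k)].
Proof.
move=> rem_succ.
have cost : 0 < n -> x.2 <= 11 * (nedges succ + n * k).
  move=> n_gt0; have := region_cost_le P_preds (erefl p) rem_succ sizeP.
  have : k <= n * k by rewrite leq_pmull.
  by rewrite /x; move: n_le_m n_gt0; lia.
move: cost; rewrite {}/x (regionE P (erefl p)); set r := process _ _ _ _ _ _ _ _.
cbn beta iota zeta delta [fst snd] => cost.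
have [T _ top good] := region_spec P_preds (erefl p) rem_succ.
split=> // v /andP [rv vr]; rewrite ltn_neqAle; apply/andP; split.
  by apply: contraNneq vr => pv; apply: top.
by apply: leq_bigmax_cond; rewrite inE.
Qed.

Lemma td_loop_spec f rem b (r := td_loop own pr succ tv tesc tsig f P rem) :
  #|Vsub rem| < f -> (forall v, rem v -> has rem (succ v)) -> (forall v, rem v -> pr v < b) ->
  topdown own pr succ tv tsig (Vsub rem) r.1 /\
  r.2 <= b * (13 * (nedges succ + n * k)) + n + 1.
Proof.
rewrite {}/r; elim: f rem b => [|f IH] rem b card_lt rem_succ pr_lt //=.
rewrite [cfold _ _ false]surjective_pairing cfold_fst foldl_orb cfold_snd0 // size_enum_ord /=.
case: hasP => [[v0 _ rv0]|no_rem] /=; last first.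
  have -> : Vsub rem = set0.
    by apply/setP => v; rewrite !inE; apply/negP => rv; apply: no_rem; exists v; rewrite ?mem_enum.
  by split; [exact: TDnil | rewrite addn1 ltnS leq_addl].
have n_gt0 : 0 < n := leq_ltn_trans (leq0n v0) (ltn_ord v0).
have [vm vm_rem vmE] : {vm | vm \in Vsub rem & prmax pr (Vsub rem) = pr vm}.
  by apply: eq_bigmax_cond; apply/card_gt0P; exists v0; rewrite inE.
have [T remE good pr_lt' /(_ n_gt0) cost] := region_step rem_succ.
case: (region _ _ _ _ _ _ P rem) T remE good pr_lt' cost => [[[R s] rem'] c1] /=.
set p := prmax pr (Vsub rem) => T remE good pr_lt' cost.
have rem'_sub : Vsub rem' \proper Vsub rem.
  apply/properP; split; first by apply/subsetP => v; rewrite !inE remE => /andP [].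
  by exists vm; rewrite // inE; apply/negP => /pr_lt'; rewrite /p vmE ltnn.
have [|T' cost'] := IH rem' p _ good pr_lt'.
  by move: (proper_card rem'_sub) card_lt; lia.
case: (td_loop _ _ _ _ _ _ f P rem') T' cost' => rest c2 /= T' cost'.
split.
- apply: TDcons T _; first by apply/set0Pn; exists v0; rewrite inE.
  by rewrite (_ : _ :\: _ = Vsub rem') //; apply/setP => v; rewrite !inE remE andbC.
- have p_lt_b : p < b by rewrite /p vmE; apply: pr_lt; rewrite inE in vm_rem.
  have pb := leq_mul p_lt_b (leqnn (13 * (nedges succ + n * k))).
  by move: n_le_m n_gt0 cost cost' pb; rewrite mulSn; lia.
Qed.

End TopDown.

End Decomposition.

Lemma card_le_nedges n (succ : 'I_n -> seq 'I_n) : (forall v, succ v != [::]) -> n <= nedges succ.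
Proof.
move=> succ_ne; rewrite /nedges -[n in n <= _]card_ord -sum1_card.
by apply: leq_sum => v _; case: (succ v) (succ_ne v).
Qed.

Theorem lemma11 :
  exists C : nat,
  forall (n k d : nat) (own : 'I_n -> bool) (pr : 'I_n -> nat)
         (succ : 'I_n -> seq 'I_n) (tv tesc : 'I_k -> seq 'I_n)
         (tsig : 'I_k -> 'I_n -> 'I_n),
    valid_game pr succ d ->
    valid_tangles own pr succ tv tsig tesc ->
    let (out, cost) := topdown_alg own pr succ tv tesc tsig in
    topdown own pr succ tv tsig [set: 'I_n] out /\
    cost <= C * (d.+1 * nedges succ + d.+1 * n * k) + C.
Proof.
exists 17 => n k d own pr succ tv tesc tsig [pr_le [succ_ne succ_uniq]] [tangles _].
have tv_uniq i : uniq (tv i) by case: (tangles i).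
have tesc_uniq i : uniq (tesc i) by case: (tangles i).
have tesc_escapes i := let: And4 _ _ _ e := tangles i in e.
have n_le_m := card_le_nedges succ_ne.
have card_lt : #|Vsub (fun _ : 'I_n => true)| < n.+1 by rewrite cardsT card_ord.
have no_dead_end (v : 'I_n) : true -> has predT (succ v) by case: (succ v) (succ_ne v).
have pr_lt (v : 'I_n) : true -> pr v < d.+1 by rewrite ltnS.
have [] := td_loop_spec tsig tv_uniq tesc_uniq succ_uniq tesc_escapes (count_preds_comp succ)
  (sum_size_preds_comp succ) n_le_m card_lt no_dead_end pr_lt.
rewrite /topdown_alg [preds_comp succ]surjective_pairing cost_preds_comp; cbv beta iota.
case: (td_loop _ _ _ _ _ _ _ _ _) => out c /= T cost.
split; first by rewrite (_ : [set: 'I_n] = Vsub (fun _ => true)) //; apply/setP => v; rewrite !inE.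
rewrite -mulnA -mulnDr; set X := nedges succ + n * k.
have : X <= d.+1 * X by rewrite leq_pmull.
by move: cost n_le_m; rewrite /X; lia.
Qed.
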